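(* Let $n\ge 1$, and let $a_0,a_1,\dots,a_{n-1}$ and $b_1,\dots,b_{n-1}$ be positive integers. Define $p_0=a_0$, $p_1=a_0a_1+b_1$, and $p_k=a_kp_{k-1}+b_kp_{k-2}$ for $k\ge 2$ (so $p_{n-1}/q_{n-1}$ is the value of the generalized continued fraction $a_0+\cfrac{b_1}{a_1+\cfrac{b_2}{\ddots+\cfrac{b_{n-1}}{a_{n-1}}}}$, where $q_0=1$, $q_1=a_1$, $q_k=a_kq_{k-1}+b_kq_{k-2}$; $p_{n-1},q_{n-1}$ need not be coprime). Then $$Z\bigl(D_n(a_0,a_1,\dots,a_{n-1};\,b_1,\dots,b_{n-1})\bigr)=p_{n-1}.$$
   Context: Graphs may have parallel edges, regarded as distinct. For a (multi)graph $G$, $p(G,k)$ is the number of sets of $k$ pairwise disjoint edges (no two sharing an endpoint), $p(G,0)=1$, and $Z(G)=\sum_{k\ge0}p(G,k)$ (Hosoya index). For positive integers $x_1,\dots,x_n$ and $y_1,\dots,y_{n-1}$, the caterpillar-bond graph $D_n(x_1,\dots,x_n;y_1,\dots,y_{n-1})$ is the multigraph obtained as follows: take vertices $v_1,\dots,v_n$; for each $i=1,\dots,n-1$ join $v_i$ and $v_{i+1}$ by exactly $y_i$ parallel edges; and for each $i=1,\dots,n$ attach $x_i-1$ new pendant vertices, each joined to $v_i$ by a single edge. There are no other vertices or edges. *)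

From mathcomp Require Import all_boot.
Set Implicit Arguments. Unset Strict Implicit. Unset Printing Implicit Defensive.

(* A finite multigraph is given by a finite type of edges E (parallel edges
   are distinct elements of E) and an endpoint map into a vertex type V. *)
Definition disjoint_edges (V : eqType) (u w : V * V) : bool :=
  ~~ [|| u.1 == w.1, u.1 == w.2, u.2 == w.1 | u.2 == w.2].

Definition is_matching (E : finType) (V : eqType) (ends : E -> V * V)
  (M : {set E}) : bool :=
  [forall e in M, forall f in M, (e != f) ==> disjoint_edges (ends e) (ends f)].

Definition pmatch (E : finType) (V : eqType) (ends : E -> V * V) (k : nat) : nat :=
  #|[set M : {set E} | is_matching ends M & #|M| == k]|.

(* Hosoya index Z(G) = sum_{k>=0} p(G,k); p(G,k) = 0 for k > #|E|. *)
Definition hosoya (E : finType) (V : eqType) (ends : E -> V * V) : nat :=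
  \sum_(k < #|E|.+1) pmatch ends k.

(* Caterpillar-bond graph D_n(x_1..x_n; y_1..y_{n-1}) with x_{i+1} = a i,
   y_i = b i (0-indexed: a 0 .. a (n-1), b 1 .. b (n-1)).
   Vertices are encoded in nat * nat: spine vertex v_i = (i, 0),
   the j-th pendant vertex at v_i = (i, j+1). *)
Definition cat_edge (n : nat) (a b : nat -> nat) : finType :=
  ({i : 'I_n & 'I_((a i).-1)} + {i : 'I_n & 'I_(if i.+1 < n then b i.+1 else 0)})%type.

Definition cat_ends (n : nat) (a b : nat -> nat) (e : cat_edge n a b) : (nat * nat) * (nat * nat) :=
  match e with
  | inl (existT i j) => ((i : nat, 0), (i : nat, (j : nat).+1))
  | inr (existT i _) => ((i : nat, 0), ((i : nat).+1, 0))
  end.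

Fixpoint cfp (a b : nat -> nat) (k : nat) : nat :=
  match k with
  | 0 => a 0
  | 1 => a 0 * a 1 + b 1
  | (k'.+1 as k1).+1 => a k1.+1 * cfp a b k1 + b k1.+1 * cfp a b k'
  end.

(* Write Z(S) for the number of matchings using only edges of the edge set S.
   The general counting fact ([zin_extend]) is a vertex-deletion recurrence:
   if T is a subset of S and the new edges S \ T pairwise share an endpoint,
   then a matching of S uses at most one new edge, whence
       Z(S) = Z(T) + sum_(e in S \ T) Z(edges of T disjoint from e).
   For the caterpillar we filter the edges by levels: lvl k consists of the
   edges lying among the first k spine vertices v_0..v_{k-1} and their pendants.
   The edges of lvl (k+1) \ lvl k all contain v_k: there are a_k - 1 pendant
   edges (each disjoint from all of lvl k) and b_k spine edges v_{k-1}v_k (each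
   disjoint exactly from lvl (k-1)).  Hence Z(lvl (k+1)) = a_k Z(lvl k) +
   b_k Z(lvl (k-1)), the recurrence of p_k, and Z(lvl n) is the Hosoya index. *)

From mathcomp Require Import all_boot zify.
Set Implicit Arguments. Unset Strict Implicit. Unset Printing Implicit Defensive.

Lemma disjoint_edgesC (V : eqType) (u w : V * V) :
  disjoint_edges u w = disjoint_edges w u.
Proof.
rewrite /disjoint_edges (eq_sym u.1 w.1) (eq_sym u.1 w.2) (eq_sym u.2 w.1).
by rewrite (eq_sym u.2 w.2); case: (w.1 == u.1); case: (w.2 == u.1); case: (w.1 == u.2).
Qed.

Lemma disjoint_edges_refl (V : eqType) (u : V * V) : ~~ disjoint_edges u u.
Proof. by rewrite /disjoint_edges eqxx. Qed.

Lemma incident_not_disjoint (V : eqType) (v : V) (u w : V * V) :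
  (u.1 == v) || (u.2 == v) -> (w.1 == v) || (w.2 == v) -> ~~ disjoint_edges u w.
Proof.
case: u w => u1 u2 [w1 w2] /=.
by move=> /orP[/eqP->|/eqP->] /orP[/eqP->|/eqP->]; rewrite /disjoint_edges /= eqxx ?orbT.
Qed.

Section Matchings.
Variables (E : finType) (V : eqType) (ends : E -> V * V).

Definition matchings_in (S : {set E}) : {set {set E}} :=
  [set M | is_matching ends M & M \subset S].

Definition zin (S : {set E}) : nat := #|matchings_in S|.

Definition avoiding (T : {set E}) (e : E) : {set E} :=
  [set f in T | disjoint_edges (ends f) (ends e)].

Lemma matchingP (M : {set E}) :
  reflect {in M &, forall e f, e != f -> disjoint_edges (ends e) (ends f)}
          (is_matching ends M).
Proof.
apply: (iffP forallP) => [H e f eM fM|H e].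
  by move: (H e) => /implyP /(_ eM) /forallP /(_ f) /implyP /(_ fM) /implyP.
apply/implyP => eM; apply/forallP => f; apply/implyP => fM; apply/implyP.
exact: H.
Qed.

Lemma zin_set0 : zin set0 = 1.
Proof.
rewrite /zin (_ : matchings_in set0 = [set set0]) ?cards1 //.
apply/setP => M; rewrite !inE subset0 andbC; case: eqP => [->|] //=.
by apply/matchingP => e f; rewrite inE.
Qed.

Lemma hosoya_zin : hosoya ends = zin setT.
Proof.
rewrite /hosoya /pmatch /zin.
under eq_bigr => k _ do rewrite -sum1_card big_mkcond /=.
rewrite exchange_big -[RHS]sum1_card [RHS]big_mkcond /=; apply: eq_bigr => M _.
rewrite !inE subsetT andbT.
under eq_bigr => k _ do rewrite inE.
case: (is_matching ends M) => /=; last by rewrite big1.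
have HM : #|M| < #|E|.+1 by rewrite ltnS max_card.
rewrite (bigD1 (Ordinal HM)) //= eqxx big1 // => k /negbTE nk.
case: eqP => // Hk; move: nk.
by rewrite (_ : k = Ordinal HM) ?eqxx //; apply: val_inj; rewrite /= Hk.
Qed.

Section Extension.
Variables S T : {set E}.
Hypothesis subTS : T \subset S.
Hypothesis new_meet :
  {in S :\: T &, forall e f, e != f -> ~~ disjoint_edges (ends e) (ends f)}.

Lemma matchings_in_sub : [set M in matchings_in S | M \subset T] = matchings_in T.
Proof.
apply/setP => M; rewrite !inE -andbA; case: (is_matching ends M) => //=.
by case MT: (M \subset T); rewrite ?andbF // (subset_trans MT subTS).
Qed.

Lemma new_edge_unique (M : {set E}) : M \in matchings_in S -> ~~ (M \subset T) ->
  \sum_(e in S :\: T) (e \in M : nat) = 1.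
Proof.
rewrite inE => /andP [/matchingP mM /subsetP MS] /subsetPn [e0 e0M e0T].
have e0new : e0 \in S :\: T by rewrite inE e0T MS.
rewrite (bigD1 e0) //= e0M big1 // => e /andP [enew ne].
apply/eqP; rewrite eqb0; apply/negP => eM.
by move: (new_meet enew e0new ne); rewrite mM.
Qed.

(* Adding the new edge e is a bijection from the matchings of T avoiding e
   onto the matchings of S through e. *)
Lemma matchings_through (e : E) : e \in S :\: T ->
  #|[set M in matchings_in S | e \in M]| = zin (avoiding T e).
Proof.
move=> enew; have eS : e \in S by case/setDP: enew.
have Te_T : avoiding T e \subset T by apply/subsetP => f; rewrite inE => /andP [].
have eTe : e \notin avoiding T e by rewrite inE (negbTE (disjoint_edges_refl _)) andbF.
have -> : [set M in matchings_in S | e \in M] =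
          [set e |: M | M in matchings_in (avoiding T e)].
  apply/setP => M; rewrite !inE; apply/idP/imsetP.
    move=> /andP [/andP [/matchingP mM /subsetP MS] eM].
    exists (M :\ e); last by rewrite setD1K.
    rewrite !inE; apply/andP; split.
      by apply/matchingP => f g /setD1P [_ fM] /setD1P [_ gM]; apply: mM.
    apply/subsetP => f /setD1P [fe fM]; rewrite inE mM //.
    case fT: (f \in T) => //; have fnew : f \in S :\: T by rewrite inE fT MS.
    by move: (new_meet fnew enew fe); rewrite mM.
  move=> [M' ]; rewrite inE => /andP [/matchingP mM' /subsetP M'Te] ->.
  have M'dis f : f \in M' -> disjoint_edges (ends f) (ends e).
    by move/M'Te; rewrite inE => /andP [].
  rewrite setU11 andbT; apply/andP; split.
    apply/matchingP => f g /setU1P [->|fM] /setU1P [->|gM]; rewrite ?eqxx //.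
    - by rewrite disjoint_edgesC; move=> _; exact: M'dis.
    - by move=> _; exact: M'dis.
    - exact: mM'.
  apply/subsetP => f /setU1P [-> //|fM].
  by apply: (subsetP subTS); apply: (subsetP Te_T); exact: M'Te.
rewrite card_in_imset // => M1 M2; rewrite !inE.
move=> /andP [_ /subsetP M1T] /andP [_ /subsetP M2T] M12.
have nM1 : e \notin M1 by apply: contra eTe => /M1T.
have nM2 : e \notin M2 by apply: contra eTe => /M2T.
by rewrite -(setU1K nM1) -(setU1K nM2) M12.
Qed.

Lemma zin_extend :
  zin S = zin T + \sum_(e in S :\: T) zin (avoiding T e).
Proof.
rewrite /zin -(cardsID [set M : {set E} | M \subset T] (matchings_in S)).
have -> : matchings_in S :&: [set M : {set E} | M \subset T] = matchings_in T.
  by rewrite -matchings_in_sub; apply/setP => M; rewrite !inE.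
congr addn; rewrite -sum1_card.
transitivity (\sum_(M in matchings_in S :\: [set M : {set E} | M \subset T])
                \sum_(e in S :\: T) (e \in M : nat)).
  by apply: eq_bigr => M /setDP [mM]; rewrite inE => MT; rewrite new_edge_unique.
rewrite exchange_big /=; apply: eq_bigr => e enew.
rewrite -[#|_|](matchings_through enew) -sum1_card big_mkcond [RHS]big_mkcond.
apply: eq_bigr => M _; rewrite !inE.
case eM: (e \in M); rewrite ?andbF ?andbT; last by case: ifP.
suff -> : ~~ (M \subset T) by [].
by apply/subsetPn; exists e => //; case/setDP: enew.
Qed.

End Extension.
End Matchings.

Lemma sum_tag_eq n (m : 'I_n -> nat) (i0 : nat) (c : nat) (Hi : i0 < n) :
  \sum_(x : {i : 'I_n & 'I_(m i)}) (if (tag x : nat) == i0 then c else 0) =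
  m (Ordinal Hi) * c.
Proof.
pose F (i : 'I_n) (_ : 'I_(m i)) := if (i : nat) == i0 then c else 0.
transitivity (\sum_(x : {i : 'I_n & 'I_(m i)}) F (tag x) (tagged x)).
  by apply: eq_bigr => -[].
rewrite -(sig_big_dep xpredT (fun _ => xpredT) F) /= (bigD1 (Ordinal Hi)) //=.
rewrite /F eqxx sum_nat_const card_ord mulnC big1 ?addn0 // => i ne.
apply: big1 => j _; case: eqP => // Hi0; move: ne.
by rewrite (_ : i = Ordinal Hi) ?eqxx //; apply: val_inj.
Qed.

Section Caterpillar.
Variables (n : nat) (a b : nat -> nat).
Local Notation E := (cat_edge n a b).
Local Notation ends := (@cat_ends n a b).
Local Notation pendant := (fun i : 'I_n => 'I_((a i).-1)).
Local Notation spine := (fun i : 'I_n => 'I_(if i.+1 < n then b i.+1 else 0)).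

(* Edges among v_0..v_{k-1} and their pendants: those whose far end lies
   before spine position k. *)
Definition lvl (k : nat) : {set E} := [set e | (ends e).2.1 < k].

Lemma lvl0 : lvl 0 = set0.
Proof. by apply/setP => e; rewrite !inE. Qed.

Lemma lvln : lvl n = setT.
Proof.
apply/setP; case=> [[i j]|[i j]]; rewrite !inE /=; first exact: ltn_ord.
by move: j; case: (i.+1 < n) => // -[].
Qed.

Lemma lvl_sub k : lvl k \subset lvl k.+1.
Proof. by apply/subsetP => e; rewrite !inE => /ltnW. Qed.

Lemma new_pendant k (i : 'I_n) (j : 'I_((a i).-1)) :
  (inl (Tagged pendant j) \in lvl k.+1 :\: lvl k) = ((i : nat) == k).
Proof. by rewrite !inE /=; lia. Qed.

Lemma new_spine k (i : 'I_n) (j : 'I_(if i.+1 < n then b i.+1 else 0)) :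
  (inr (Tagged spine j) \in lvl k.+1 :\: lvl k) = ((i : nat).+1 == k).
Proof. by rewrite !inE /=; lia. Qed.

Lemma new_meet k :
  {in lvl k.+1 :\: lvl k &, forall e f, e != f -> ~~ disjoint_edges (ends e) (ends f)}.
Proof.
have at_vk e : e \in lvl k.+1 :\: lvl k -> ((ends e).1 == (k, 0)) || ((ends e).2 == (k, 0)).
  by case: e => -[i j]; rewrite ?new_pendant ?new_spine /= !xpair_eqE; lia.
by move=> e f /at_vk ek /at_vk fk _; apply: incident_not_disjoint ek fk.
Qed.

Lemma avoiding_pendant k (i : 'I_n) (j : 'I_((a i).-1)) : (i : nat) = k ->
  avoiding ends (lvl k) (inl (Tagged pendant j)) = lvl k.
Proof.
move=> Hi; apply/setP; case=> -[i' j'];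
  by rewrite !inE /= /disjoint_edges /= !xpair_eqE /=; lia.
Qed.

Lemma avoiding_spine k (i : 'I_n) (j : 'I_(if i.+1 < n then b i.+1 else 0)) :
  (i : nat).+1 = k -> avoiding ends (lvl k) (inr (Tagged spine j)) = lvl k.-1.
Proof.
move=> Hi; apply/setP; case=> -[i' j'];
  by rewrite !inE /= /disjoint_edges /= !xpair_eqE /=; lia.
Qed.

Lemma zin_lvl_step k : k < n -> 0 < a k ->
  zin ends (lvl k.+1) =
  a k * zin ends (lvl k) + (if k is k'.+1 then b k * zin ends (lvl k') else 0).
Proof.
move=> kn ak; rewrite (zin_extend (lvl_sub k) (@new_meet k)) big_mkcond big_sumType.
have pendants : \sum_(x : {i : 'I_n & pendant i})
    (if inl x \in lvl k.+1 :\: lvl k then zin ends (avoiding ends (lvl k) (inl x)) else 0)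
    = (a k).-1 * zin ends (lvl k).
  rewrite -(sum_tag_eq (fun i : 'I_n => (a i).-1) _ kn); apply: eq_bigr => -[i j] _.
  by rewrite new_pendant /=; case: eqP => // Hi; rewrite avoiding_pendant.
have spines : \sum_(x : {i : 'I_n & spine i})
    (if inr x \in lvl k.+1 :\: lvl k then zin ends (avoiding ends (lvl k) (inr x)) else 0)
    = if k is k'.+1 then b k * zin ends (lvl k') else 0.
  case: k kn {ak pendants} => [|k'] kn /=.
    by rewrite big1 // => -[i j] _; rewrite new_spine.
  pose nb (i : 'I_n) := if i.+1 < n then b i.+1 else 0.
  transitivity (nb (Ordinal (ltnW kn)) * zin ends (lvl k')); last by rewrite /nb /= kn.
  rewrite -(sum_tag_eq nb).
  apply: eq_bigr => -[i j] _; rewrite new_spine /= eqSS.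
  by case: eqP => // Hi; rewrite avoiding_spine //= Hi.
by rewrite pendants spines -[in RHS](prednK ak) mulSn addnA.
Qed.

Lemma zin_lvl_cfp : (forall i, i < n -> 0 < a i) ->
  forall k, k < n -> zin ends (lvl k.+1) = cfp a b k.
Proof.
move=> a_pos; elim/ltn_ind => -[|[|k]] IH kn; rewrite zin_lvl_step ?a_pos //.
- by rewrite lvl0 zin_set0 muln1 addn0.
- by rewrite IH ?lvl0 ?zin_set0 ?(ltnW kn) // muln1 mulnC.
- by rewrite !IH ?(ltnW kn) ?(ltnW (ltnW kn)).
Qed.

End Caterpillar.

(* Level n is the whole graph. *)
Theorem theorem2 (n : nat) (a b : nat -> nat) :
  1 <= n ->
  (forall i, i < n -> 0 < a i) ->
  (forall i, 1 <= i < n -> 0 < b i) ->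
  hosoya (@cat_ends n a b) = cfp a b n.-1.
Proof.
move=> n_pos a_pos _.
have last_level : n.-1 < n by rewrite prednK.
by rewrite hosoya_zin -lvln -(@zin_lvl_cfp n a b a_pos _ last_level) prednK.
Qed.
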